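(* Fix integers $k \ge 3$ and $i \in \{2,\dots,k-1\}$, and let $T = \{1,\dots,k\}\setminus\{i\}$. Let $d \ge 1$ and suppose that $S \subset C_d$ satisfies $|S| \equiv 1 \pmod{k-1}$ and $|S| \le d - \log_k d$. Then $T$ tiles $\mathbb{Z}_k^d \setminus S$, i.e. $\mathbb{Z}_k^d \setminus S$ is a disjoint union of copies of $T$ in $\mathbb{Z}_k^d$.
   Context: $\mathbb{Z}_k$ denotes the integers modulo $k$, with elements written $0,1,\dots,k-1$. A copy of $T$ in $\mathbb{Z}_k^d$ is a set of the form $\{x + j e_s : j \in \mathbb{Z}_k,\ j \ne j_0\}$ for some $x \in \mathbb{Z}_k^d$, some coordinate direction $s \in \{1,\dots,d\}$ (with $e_s$ the $s$-th unit vector) and some $j_0 \in \mathbb{Z}_k$; that is, a line in one coordinate direction with one point removed (equivalently, a translate of the image of $T$ under $\mathbb{Z}\to\mathbb{Z}_k$ placed along one coordinate axis). For $1 \le j \le d$, the $j$-th corner $c_{j,d} \in \mathbb{Z}_k^d$ is the point whose $j$-th coordinate is $k-1$ and whose other coordinates are $0$, and $C_d = \{c_{j,d} : 1 \le j \le d\}$. *)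

From Stdlib Require Reals.
From mathcomp Require Import all_boot.
Set Implicit Arguments. Unset Strict Implicit. Unset Printing Implicit Defensive.

(* Points of Z_k^d: functions from coordinates 'I_d to residues 'I_k
   (element of 'I_k with value v represents the residue class of v). *)
Definition point (k d : nat) := {ffun 'I_d -> 'I_k}.

Definition Tset (k i : nat) (t : nat) : bool := (1 <= t <= k) && (t != i).

Definition copyT (k d i : nat) (x : point k d) (s : 'I_d) : {set point k d} :=
  [set y : point k d |
     [forall t : 'I_d, (t != s) ==> (y t == x t)] &&
     [exists t : 'I_k.+1, Tset k i t && (val (y s) == (val (x s) + t) %% k)]].

Definition is_copyT (k d i : nat) (A : {set point k d}) : Prop :=
  exists (x : point k d) (s : 'I_d), A = copyT i x s.

Definition corner_pt (k d : nat) (j : 'I_d) (y : point k d) : bool :=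
  [forall t : 'I_d, val (y t) == (if t == j then k.-1 else 0)].

Definition corners (k d : nat) : {set point k d} :=
  [set y : point k d | [exists j : 'I_d, corner_pt j y]].

Definition tiles (k d i : nat) (X : {set point k d}) : Prop :=
  exists P : {set {set point k d}},
    partition P X /\ (forall A, A \in P -> is_copyT i A).

Definition logk (k d : nat) : Reals.Rdefinitions.R :=
  Reals.Rdefinitions.Rdiv (Reals.Rpower.ln (Reals.Raxioms.INR d))
                          (Reals.Rpower.ln (Reals.Raxioms.INR k)).

(* Every copy of T is a coordinate line with one point removed ("punctured line"),
   and a subcube with one point removed, or with a subcube removed, is tiled by
   punctured lines (induction on the dimension).  Let J be the set of directions of
   the corners in S, m = |J| = 1 (mod k-1).  The bound |S| <= d - log_k d gives
   m <= k^(d-m), so the cube Z_k^(~J) can be cut into m subcubes, labelled by J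
   (split a subcube into its k layers, adding k-1 pieces, until there are m).
   Write dir x for the label of the piece containing the ~J-part of x.  The points x
   whose J-part is supported on {dir x} with x_(dir x) <> k-1 form punctured lines
   in direction dir x; the points with ~J-part 0 and at least two nonzero
   J-coordinates are tiled by induction on |J|.  What remains of each fibre
   {x | x_J = z} is the fibre minus the point z (if z is a corner or has two
   nonzero coordinates), or the fibre minus the subcube {x | dir x = j} (if z is
   supported on {j}, z_j <> k-1), and both are tiled by punctured lines. *)

From Stdlib Require Import Reals Lra Psatz.
From mathcomp Require Import all_boot zify.
Set Implicit Arguments. Unset Strict Implicit. Unset Printing Implicit Defensive.

Section Tiles.
Variables (k d i : nat).
Local Notation pt := (point k d).

Lemma tiles0 : tiles i (set0 : {set pt}).
Proof. by exists set0; split=> [|A]; rewrite ?partition_set0 ?inE. Qed.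

Lemma tilesU (A B : {set pt}) :
  [disjoint A & B] -> tiles i A -> tiles i B -> tiles i (A :|: B).
Proof.
move=> dAB [PA [pA cA]] [PB [pB cB]]; exists (PA :|: PB); split; last first.
  by move=> X /setUP[]; [apply: cA | apply: cB].
move: pA pB => /and3P[/eqP cvA tA nA] /and3P[/eqP cvB tB nB].
apply/and3P; split.
- by rewrite /cover bigcup_setU -/(cover PA) -/(cover PB) cvA cvB.
- by apply: trivIsetU => //; rewrite cvA cvB.
- by rewrite inE negb_or nA nB.
Qed.

Lemma tiles_copy (A : {set pt}) : A != set0 -> is_copyT i A -> tiles i A.
Proof.
move=> nA cA; exists [set A]; split; last by move=> X /set1P->.
by apply/and3P; split; rewrite ?cover1 ?trivIset1 // inE eq_sym.
Qed.

Lemma tiles_fibers (I : eqType) (g : pt -> I) (X : {set pt}) :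
  (forall y, y \in X -> tiles i [set x in X | g x == g y]) -> tiles i X.
Proof.
move: {2}#|X| (leqnn #|X|) => m; elim: m X => [|m IH] X cX tg.
  by move: cX; rewrite leqn0 cards_eq0 => /eqP->; apply: tiles0.
case: (set_0Vmem X) => [->|[y yX]]; first exact: tiles0.
set X' := [set x in X | g x != g y].
have -> : X = [set x in X | g x == g y] :|: X'.
  by apply/setP => x; rewrite !inE -andb_orr orbN andbT.
apply: tilesU (tg y yX) _.
  by rewrite disjoints_subset; apply/subsetP => x; rewrite !inE => /andP[-> ->].
have ltX : X' \proper X.
  apply/properP; split; first by apply/subsetP => x; rewrite inE => /andP[].
  by exists y; rewrite // inE eqxx andbF.
apply: IH => [|x]; first by rewrite -ltnS (leq_trans (proper_card ltX) cX).
rewrite inE => /andP[xX gxy].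
have -> : [set z in X' | g z == g x] = [set z in X | g z == g x].
  by apply/setP => z; rewrite !inE; case: (g z =P g x) => [->|]; rewrite ?gxy ?andbT ?andbF.
exact: (tg x xX).
Qed.
End Tiles.

Lemma modn_lt2 k x : x < 2 * k -> x %% k = if x < k then x else x - k.
Proof.
move=> h2; case: ltnP => h1; first exact: modn_small.
have -> : x = (x - k) + k by lia.
rewrite modnDr modn_small; lia.
Qed.

Lemma shift_mod_neq k i v u : 0 < i <= k -> v < k -> u < k ->
  (exists2 t, (0 < t <= k) && (t != i) & u = ((v + k - i) %% k + t) %% k)
  <-> u != v.
Proof.
move=> /andP[i1 ik] vk uk; rewrite (@modn_lt2 k (v + k - i)); last by lia.
split=> [[t /andP[/andP[t0 tk] ti]]|uv].
  by repeat (case: ifP => ?); rewrite modn_lt2; repeat (case: ifP => ?); lia.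
set T := u + k - v + i.
exists (if T > 2 * k then T - 2 * k else if T > k then T - k else T).
  by rewrite /T; repeat (case: ifP => ?); lia.
rewrite /T; repeat (case: ifP => ?); rewrite modn_lt2; repeat (case: ifP => ?); lia.
Qed.

(** * Subcubes *)

Section Cubes.
Variables (n d : nat).
Local Notation k := n.+1.
Local Notation pt := (point k d).

Definition upd (x : pt) (s : 'I_d) (a : 'I_k) : pt :=
  [ffun t => if t == s then a else x t].

Definition mix (K : {set 'I_d}) (y w : pt) : pt :=
  [ffun t => if t \in K then y t else w t].

Lemma updE (x : pt) s a t : upd x s a t = if t == s then a else x t.
Proof. by rewrite ffunE. Qed.

Lemma upd_id (x : pt) s : upd x s (x s) = x.
Proof. by apply/ffunP => t; rewrite updE; case: eqP => [->|]. Qed.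

Lemma upd_upd (x : pt) s a b : upd (upd x s a) s b = upd x s b.
Proof. by apply/ffunP => t; rewrite !updE; case: eqP. Qed.

Lemma mixE (K : {set 'I_d}) (y w : pt) t : mix K y w t = if t \in K then y t else w t.
Proof. by rewrite ffunE. Qed.

Definition cube_def (x : pt) (K : {set 'I_d}) : {set pt} :=
  [set y : pt | [forall t, (t \notin K) ==> (y t == x t)]].
Fact cube_key : unit. Proof. by []. Qed.
Definition cube := locked_with cube_key cube_def.
Canonical cube_unlockable := [unlockable fun cube].

Lemma cubeP (x : pt) (K : {set 'I_d}) (y : pt) :
  reflect (forall t, t \notin K -> y t = x t) (y \in cube x K).
Proof.
rewrite [cube]unlock inE; apply: (iffP forallP) => [h t tK|h t].
  by have /implyP/(_ tK)/eqP := h t.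
by apply/implyP => /h ->.
Qed.

Lemma cube_center (x : pt) (K : {set 'I_d}) : x \in cube x K.
Proof. by apply/cubeP. Qed.

Lemma cube0 (x : pt) : cube x set0 = [set x].
Proof.
apply/setP => y; rewrite inE; apply/cubeP/eqP => [h|-> //].
by apply/ffunP => t; apply: h; rewrite inE.
Qed.

Lemma cube1E (x : pt) s (y : pt) : (y \in cube x [set s]) = (y == upd x s (y s)).
Proof.
apply/cubeP/eqP => [h|-> t]; last by rewrite in_set1 updE => /negbTE->.
apply/ffunP => t; rewrite updE; case: eqP => [->|/eqP ts] //.
by apply: h; rewrite in_set1.
Qed.

Lemma cube_layer (w : pt) (R : {set 'I_d}) s a : s \in R ->
  [set y in cube w R | y s == a] = cube (upd w s a) (R :\ s).
Proof.
move=> sR; apply/setP => y; rewrite inE.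
apply/andP/cubeP => [[/cubeP h /eqP ys] t|h].
  rewrite !inE negb_and negbK updE; case: eqP => [->//|_ /= tR]; exact: h.
split; last by rewrite h ?updE ?eqxx // !inE eqxx.
apply/cubeP => t tR; have ts : t != s by apply: contraNneq tR => ->.
by rewrite h ?updE ?(negbTE ts) // !inE ts.
Qed.

Lemma cube_layer_center (w : pt) (R : {set 'I_d}) s : s \in R ->
  [set y in cube w R | y s == w s] = cube w (R :\ s).
Proof. by move=> sR; rewrite cube_layer // upd_id. Qed.

Lemma card_cube (w : pt) (R : {set 'I_d}) : #|cube w R| = k ^ #|R|.
Proof.
move cR : #|R| => r; elim: r R w cR => [|r IH] R w cR.
  by move/eqP: cR; rewrite cards_eq0 => /eqP ->; rewrite cube0 cards1.
have /card_gt0P [s sR] : 0 < #|R| by rewrite cR.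
have cR' : #|R :\ s| = r by move: cR; rewrite (cardsD1 s R) sR => -[].
rewrite -sum1_card (partition_big (fun y : pt => y s) predT) //=.
under eq_bigr => a _ do rewrite sum1dep_card cube_layer // IH //.
by rewrite sum_nat_const card_ord expnS.
Qed.

Lemma subset_cube (w x : pt) (R K : {set 'I_d}) :
  K \subset R -> x \in cube w R -> cube x K \subset cube w R.
Proof.
move=> /subsetP KR /cubeP xw; apply/subsetP => y /cubeP yx; apply/cubeP => t tR.
by rewrite yx ?xw //; apply: contra tR; apply: KR.
Qed.

Lemma upd_cube (w x : pt) (K : {set 'I_d}) s a : s \in K ->
  x \in cube w K -> upd x s a \in cube w K.
Proof.
move=> sK /cubeP xw; apply/cubeP => t tK; rewrite updE; case: eqP => [ts|_].
  by move: tK; rewrite ts sK.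
exact: xw.
Qed.

Definition origin : pt := [ffun=> ord0].

Lemma cube_mixE (J : {set 'I_d}) (x y : pt) :
  (x \in cube (mix J y origin) (~: J)) = (mix J x origin == mix J y origin).
Proof.
apply/cubeP/eqP => [xy|/ffunP xy t]; first apply/ffunP => t.
  by rewrite !mixE; case: ifP => // tJ; rewrite xy ?mixE ?tJ // inE tJ.
by rewrite inE negbK => tJ; have := xy t; rewrite !mixE tJ.
Qed.

Definition supp (x : pt) : {set 'I_d} := [set j | x j != ord0].

Lemma supp_upd0 (x : pt) s : supp (upd x s ord0) = supp x :\ s.
Proof.
by apply/setP => t; rewrite !inE updE; case: (t =P s) => [->|]; rewrite ?eqxx.
Qed.

Lemma card_supp_upd0 (x : pt) s : x s != ord0 -> #|supp x| = #|supp (upd x s ord0)|.+1.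
Proof. by move=> xs; rewrite supp_upd0 (cardsD1 s) inE xs. Qed.

(** * Partitions of a cube into subcubes *)

Definition cube_partition (w : pt) (R : {set 'I_d}) (m : nat) (lab : pt -> nat) :=
  (forall y, y \in cube w R -> lab y < m) /\
  (forall c, c < m -> exists (x : pt) (K : {set 'I_d}),
     K \subset R /\ [set y in cube w R | lab y == c] = cube x K).

Lemma cube_partition1 (w : pt) (R : {set 'I_d}) : cube_partition w R 1 (fun=> 0).
Proof.
split=> // c; rewrite ltnS leqn0 => /eqP->; exists w, R; split=> //.
by apply/setP => y; rewrite inE andbT.
Qed.

Lemma cube_partition_piece (w : pt) R m lab : cube_partition w R m lab ->
  m < k ^ #|R| -> exists2 c, c < m & 1 < #|[set y in cube w R | lab y == c]|.
Proof.
move=> [lab_lt _] mR.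
case: (boolP [exists c : 'I_m, 1 < #|[set y in cube w R | lab y == c]|]).
  by case/existsP => c; exists c.
move/existsPn => small; have inj : {in enum (cube w R) &, injective lab}.
  move=> y1 y2; rewrite !mem_enum => y1R y2R E.
  have := small (Ordinal (lab_lt _ y1R)); rewrite -leqNgt => /card_le1_eqP.
  by apply; rewrite inE ?y1R ?y2R /= -?E eqxx.
have: size (map lab (enum (cube w R))) <= size (iota 0 m).
  apply: uniq_leq_size => [|_ /mapP[y yR ->]]; first by rewrite map_inj_in_uniq ?enum_uniq.
  by rewrite mem_iota lab_lt // -mem_enum.
by rewrite size_map size_iota -cardE card_cube leqNgt mR.
Qed.

Section Split.
Variables (w x : pt) (R K : {set 'I_d}) (s : 'I_d) (m c0 : nat) (lab : pt -> nat).
Hypotheses (labP : cube_partition w R m lab) (c0m : c0 < m).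
Hypotheses (sK : s \in K) (KR : K \subset R).
Hypothesis fiber_c0 : [set y in cube w R | lab y == c0] = cube x K.

(* The layer of cube x K through x keeps the label c0; the other k - 1 layers,
   indexed by unlift (x s) of their s-coordinate, get the labels m, ..., m + n - 1. *)
Definition split_label (y : pt) : nat :=
  if y \in cube x K then
    if unlift (x s) (y s) is Some e then m + e else lab y
  else lab y.

Let sub_xK : cube x K \subset cube w R.
Proof. by rewrite -fiber_c0; apply/subsetP => y; rewrite inE => /andP[]. Qed.

Let lab_xK y : y \in cube x K -> lab y = c0.
Proof. by rewrite -fiber_c0 inE => /andP[_ /eqP]. Qed.

Lemma split_label_lt y : y \in cube w R -> split_label y < m + n.
Proof.
move=> yR; have lab_lt := ltn_addr n (labP.1 _ yR).
rewrite /split_label; case: ifP => // _.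
by case: (unliftP (x s) (y s)) => [e _|_]; rewrite ?ltn_add2l.
Qed.

Lemma fiber_split_label_old c : c < m ->
  [set y in cube w R | split_label y == c] =
  if c == c0 then cube x (K :\ s) else [set y in cube w R | lab y == c].
Proof.
move=> cm; apply/setP => y; rewrite inE /split_label.
case: (boolP (y \in cube x K)) => yK; last first.
  case: (c =P c0) => [->|_]; last by rewrite inE.
  rewrite -cube_layer_center // inE (negbTE yK); apply/negbTE.
  by apply: contra yK; rewrite -fiber_c0 inE.
rewrite (subsetP sub_xK _ yK) /=.
case: (c =P c0) => [->|/eqP cc0]; last first.
  rewrite eq_sym in cc0; rewrite inE (subsetP sub_xK _ yK) lab_xK // (negbTE cc0) andbF.
  case: (unliftP (x s) (y s)) => [e _|_]; last by rewrite (negbTE cc0).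
  by rewrite gtn_eqF // (leq_trans cm (leq_addr _ _)).
rewrite -cube_layer_center // inE yK lab_xK //=.
case: (unliftP (x s) (y s)) => [e ->|->]; last by rewrite !eqxx.
by rewrite gtn_eqF ?ltn_addr // eq_sym (negbTE (neq_lift _ _)).
Qed.

Lemma fiber_split_label_new (e : 'I_n) :
  [set y in cube w R | split_label y == m + e] = cube (upd x s (lift (x s) e)) (K :\ s).
Proof.
rewrite -(cube_layer _ _ sK); apply/setP => y; rewrite !inE /split_label.
case: (boolP (y \in cube x K)) => yK; last first.
  case: (boolP (y \in cube w R)) => //= yR.
  by rewrite (ltn_eqF (ltn_addr _ (labP.1 _ yR))).
rewrite (subsetP sub_xK _ yK) /=.
case: (unliftP (x s) (y s)) => [e' ->|->].
  by rewrite eqn_add2l (inj_eq val_inj) (inj_eq (@lift_inj _ _)).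
by rewrite lab_xK // (ltn_eqF (ltn_addr _ c0m)) (negbTE (neq_lift _ _)).
Qed.

Lemma cube_partition_split : cube_partition w R (m + n) split_label.
Proof.
split=> [y|c cmn]; first exact: split_label_lt.
have [cm|mc] := ltnP c m.
  rewrite fiber_split_label_old //; case: eqP => _; last exact: labP.2.
  by exists x, (K :\ s); split=> //; apply: subset_trans KR; apply: subsetDl.
have en : c - m < n by rewrite ltn_subLR.
rewrite -(subnKC mc) -[c - m]/(nat_of_ord (Ordinal en)) fiber_split_label_new.
exists (upd x s (lift (x s) (Ordinal en))), (K :\ s); split=> //.
by apply: subset_trans KR; apply: subsetDl.
Qed.

End Split.

Lemma cube_partition_exists (w : pt) (R : {set 'I_d}) q : 0 < n ->
  q * n + 1 <= k ^ #|R| -> exists lab, cube_partition w R (q * n + 1) lab.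
Proof.
move=> n_gt0; elim: q => [_|q IH qR]; first by exists (fun=> 0); apply: cube_partition1.
have mR : q * n + 1 < k ^ #|R| by apply: leq_trans qR; rewrite mulSn; lia.
have [lab labP] := IH (ltnW mR).
have [c0 c0m big] := cube_partition_piece labP mR.
have [x [K [KR fib]]] := labP.2 c0 c0m.
have /card_gt0P [s sK] : 0 < #|K|.
  rewrite lt0n; apply: contraTneq big => /eqP; rewrite cards_eq0 fib => /eqP->.
  by rewrite cube0 cards1.
exists (split_label x K s (q * n + 1) lab).
have -> : q.+1 * n + 1 = q * n + 1 + n by rewrite mulSn; lia.
exact: (cube_partition_split labP c0m sK KR fib).
Qed.

Lemma cube_partition_in (T : finType) (L : {set T}) (w : pt) (R : {set 'I_d}) q :
  0 < n -> #|L| = q * n + 1 -> #|L| <= k ^ #|R| ->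
  exists lab : pt -> T, (forall y, y \in cube w R -> lab y \in L) /\
    (forall l, l \in L -> exists (x : pt) (K : {set 'I_d}),
       K \subset R /\ [set y in cube w R | lab y == l] = cube x K).
Proof.
move=> n_gt0 cL; rewrite cL => LR.
have [lab [lab_lt lab_fib]] := cube_partition_exists w n_gt0 LR.
have /card_gt0P [l0 _] : 0 < #|L| by rewrite cL addn1.
have sizeL : size (enum L) = q * n + 1 by rewrite -cardE.
exists (fun y => nth l0 (enum L) (lab y)); split=> [y yR|l lL].
  by rewrite -mem_enum mem_nth // sizeL lab_lt.
have [|x [K [KR fib]]] := lab_fib (index l (enum L)).
  by rewrite -sizeL index_mem mem_enum.
exists x, K; split=> //; rewrite -fib; apply/setP => y; rewrite !inE.
case: (boolP (y \in cube w R)) => //= yR.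
apply/eqP/eqP => [<-|->]; last by rewrite nth_index ?mem_enum.
by rewrite index_uniq ?enum_uniq ?sizeL ?lab_lt.
Qed.

(** * Tiling by punctured lines *)

Section Tiling.
Variable i : nat.
Hypotheses (n_gt0 : 0 < n) (i_range : 0 < i <= k).

Definition punct_line (y : pt) (s : 'I_d) (v : 'I_k) : {set pt} :=
  [set z in cube y [set s] | z s != v].

Lemma punct_line_copy y s v : is_copyT i (punct_line y s v).
Proof.
(* Based at s-coordinate v - i, the offset i that T omits lands on v. *)
pose a : 'I_k := inord ((v + k - i) %% k).
have aE : a = (v + k - i) %% k :> nat by rewrite inordK // ltn_mod.
exists (upd y s a), s; apply/setP => z; rewrite /copyT !inE updE eqxx.
congr andb.
  apply/cubeP/forallP => h t.
    by apply/implyP => ts; rewrite updE (negbTE ts) h // inE.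
  by rewrite inE => ts; have /implyP/(_ ts) := h t; rewrite updE (negbTE ts) => /eqP.
have [to_t of_t] := shift_mod_neq i_range (ltn_ord v) (ltn_ord (z s)).
apply/idP/existsP => [/of_t [t tT zt]|[t /andP[tT /eqP zt]]]; last first.
  by apply: to_t; exists (val t); rewrite -?aE.
have tk : t < k.+1 by case/andP: tT => /andP[_ ?] _.
by exists (Ordinal tk); rewrite /Tset tT /= zt /a inordK ?ltn_mod.
Qed.

Lemma tiles_punct_line y s v : tiles i (punct_line y s v).
Proof.
apply: tiles_copy (punct_line_copy y s v); apply/set0Pn.
exists (upd y s (if v == ord0 then ord_max else ord0)).
rewrite !inE cube1E !updE !eqxx; case: (v =P ord0) => [->|/eqP]; last by rewrite eq_sym.
by rewrite -(inj_eq val_inj) /= -lt0n.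
Qed.

Lemma tiles_cubeD1 (x : pt) (K : {set 'I_d}) : tiles i (cube x K :\ x).
Proof.
move cK : #|K| => r; elim: r K x cK => [|r IH] K x cK.
  by move/eqP: cK; rewrite cards_eq0 => /eqP->; rewrite cube0 setDv; apply: tiles0.
have /card_gt0P [s sK] : 0 < #|K| by rewrite cK.
have cK' : #|K :\ s| = r by move: cK; rewrite (cardsD1 s K) sK => -[].
have sub_sK : cube x [set s] \subset cube x K.
  by apply: subset_cube (cube_center _ _); rewrite sub1set.
pose g (y : pt) := if y \in cube x [set s] then None else Some (y s).
apply: (tiles_fibers (g := g)) => y _; rewrite /g.
case: ifP => yL.
  congr tiles: (tiles_punct_line x s (x s)); apply/setP => z; rewrite !inE.
  case: (boolP (z \in cube x [set s])) => zL; last by rewrite andbF.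
  rewrite (subsetP sub_sK _ zL) eqxx !andbT.
  have zE : z = upd x s (z s) by apply/eqP; rewrite -cube1E.
  by congr (~~ _); apply/eqP/eqP => [zs|->] //; rewrite zE zs upd_id.
congr tiles: (IH (K :\ s) (upd x s (y s)) cK'); apply/setP => z.
rewrite -cube_layer // !inE.
case: (boolP (z \in cube x [set s])) => zL /=.
  rewrite andbF; case: (z s =P y s) => zs; rewrite ?andbF //.
  by move: zL; rewrite cube1E zs => ->.
have zx : z != x by apply: contraNneq zL => ->; apply: cube_center.
have zu : z != upd x s (y s) by apply: contraNneq zL => ->; rewrite cube1E updE eqxx.
by rewrite zx zu.
Qed.

Lemma tiles_cubeD (z w : pt) (R K : {set 'I_d}) : K \subset R -> w \in cube z R ->
  tiles i (cube z R :\: cube w K).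
Proof.
move=> /subsetP KR /cubeP wz.
apply: (tiles_fibers (g := mix K ^~ w)) => y0 _; set p := mix K y0 w.
congr tiles: (tiles_cubeD1 p (R :\: K)); apply/setP => y; rewrite !inE.
have pE t : p t = if t \in K then y0 t else w t by rewrite mixE.
apply/andP/andP => [[yp /cubeP yR]|[/andP[yK /cubeP yz] /eqP yp]].
  have yE : mix K y w = p.
    apply/ffunP => t; rewrite mixE pE; case: ifP => tK //.
    by rewrite yR ?pE ?tK // !inE tK.
  split; last by rewrite yE.
  apply/andP; split.
    apply: contra yp => /cubeP yw; rewrite -yE; apply/eqP/ffunP => t.
    by rewrite mixE; case: ifP => // /negbT /yw.
  apply/cubeP => t tR; rewrite yR ?pE; last by rewrite !inE (negbTE tR) andbF.
  by case: ifP => [/KR|_]; [rewrite (negbTE tR) | apply: wz].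
split.
  apply: contra yK => /eqP ->; apply/cubeP => t tK.
  by rewrite pE (negbTE tK).
apply/cubeP => t; rewrite !inE negb_and negbK -yp mixE.
by case: ifP => //= tK tR; rewrite yz // wz.
Qed.

(** * The complement of a set of corners *)

Definition offaxis_def (J : {set 'I_d}) : {set pt} :=
  [set x in cube origin J | 1 < #|supp x|].
Fact offaxis_key : unit. Proof. by []. Qed.
Definition offaxis := locked_with offaxis_key offaxis_def.
Canonical offaxis_unlockable := [unlockable fun offaxis].

Lemma in_offaxis J x : (x \in offaxis J) = (x \in cube origin J) && (1 < #|supp x|).
Proof. by rewrite [offaxis]unlock inE. Qed.

Lemma tiles_offaxis (J : {set 'I_d}) : tiles i (offaxis J).
Proof.
move cJ : #|J| => r; elim: r J cJ => [|r IH] J cJ.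
  suff -> : offaxis J = set0 by apply: tiles0.
  move/eqP: cJ; rewrite cards_eq0 => /eqP->; apply/setP => x; rewrite in_offaxis cube0 !inE.
  case: eqP => // ->; rewrite (_ : supp origin = set0) ?cards0 //.
  by apply/setP => t; rewrite !inE ffunE.
have /card_gt0P [s sJ] : 0 < #|J| by rewrite cJ.
have cJ' : #|J :\ s| = r by move: cJ; rewrite (cardsD1 s J) sJ => -[].
pose g (x : pt) := if x s == ord0 then None else Some (upd x s ord0).
apply: (tiles_fibers (g := g)) => y; rewrite in_offaxis /g => /andP[yJ ysupp].
case: eqP => [ys|/eqP ys].
  congr tiles: (IH _ cJ'); apply/setP => x; rewrite inE !in_offaxis -cube_layer_center //.
  by rewrite inE ffunE; case: eqP; rewrite ?andbF ?andbT.
congr tiles: (tiles_punct_line (upd y s ord0) s ord0); apply/setP => x.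
rewrite !inE in_offaxis cube1E upd_upd.
case: (x s =P ord0) => [->|/eqP xs]; first by rewrite !andbF.
rewrite andbT /=; apply/eqP/idP => [xE|/andP[_ /eqP[E]]].
  have E : upd x s ord0 = upd y s ord0 by rewrite xE upd_upd.
  rewrite E eqxx andbT {1}xE upd_cube //=.
  by rewrite (card_supp_upd0 xs) E ltnS -ltnS -card_supp_upd0.
by rewrite -(upd_upd y s ord0) -E upd_upd upd_id.
Qed.

Lemma ord_max_neq0 : (ord_max : 'I_k) != ord0.
Proof. by rewrite -(inj_eq val_inj) /= -lt0n. Qed.

Definition corner (j : 'I_d) : pt := [ffun t => if t == j then ord_max else ord0].

Lemma supp_corner j : supp (corner j) = [set j].
Proof.
apply/setP => t; rewrite !inE ffunE.
by case: (t =P j) => _; rewrite ?eqxx ?ord_max_neq0.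
Qed.

Lemma corner_inj : injective corner.
Proof. by move=> j j' /(congr1 supp); rewrite !supp_corner => /set1_inj. Qed.

Lemma corner_ptE j y : corner_pt j y = (y == corner j).
Proof.
apply/forallP/eqP => [yc|-> t]; last by rewrite ffunE; case: (t =P j).
by apply/ffunP => t; apply: val_inj; rewrite ffunE; have /eqP := yc t; case: (t =P j).
Qed.

Lemma sub_corners (S : {set pt}) :
  S \subset corners k d -> S = corner @: [set j | corner j \in S].
Proof.
move=> /subsetP SC; apply/setP => y; apply/idP/imsetP => [yS|[j + ->]]; last by rewrite inE.
have := SC _ yS; rewrite inE => /existsP[j]; rewrite corner_ptE => /eqP yc.
by exists j; rewrite // inE -yc.
Qed.

Section Complement.
Variables (J : {set 'I_d}) (lab : pt -> 'I_d).
Hypothesis lab_in : forall y, y \in cube origin (~: J) -> lab y \in J.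
Hypothesis lab_fiber : forall j, j \in J -> exists (w : pt) (K : {set 'I_d}),
  K \subset ~: J /\ [set y in cube origin (~: J) | lab y == j] = cube w K.

Let base (x : pt) := mix J origin x.
Let dir (x : pt) := lab (base x).

Definition axial (x : pt) :=
  (J :&: supp x \subset [set dir x]) && (x (dir x) != ord_max).

Let base_cube x : base x \in cube origin (~: J).
Proof. by apply/cubeP => t; rewrite inE negbK mixE => ->. Qed.

Let dirJ x : dir x \in J.
Proof. exact/lab_in/base_cube. Qed.

Lemma corner_notin_axial j : j \in J -> ~~ axial (corner j).
Proof.
move=> jJ; rewrite /axial supp_corner.
have /setIidPr-> : [set j] \subset J by rewrite sub1set.
rewrite sub1set inE.
by apply/nandP; case: eqP => [<-|]; [right; rewrite ffunE eqxx negbK | left].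
Qed.

Lemma offaxis_notin_axial x : x \in offaxis J -> ~~ axial x.
Proof.
rewrite in_offaxis => /andP[/cubeP xJ sx]; apply/nandP; left; apply: contraTN sx => sub.
rewrite -leqNgt -(cards1 (dir x)) (leq_trans _ (subset_leq_card sub)) //.
rewrite subset_leq_card //; apply/subsetP => t tx; rewrite inE tx andbT.
by apply: contraTT tx => tJ; rewrite inE xJ ?ffunE ?eqxx.
Qed.

Lemma corner_notin_offaxis j : corner j \notin offaxis J.
Proof. by rewrite in_offaxis supp_corner cards1 andbF. Qed.

Lemma axial_fiber y :
  [set x in ~: (corner @: J) | axial x && (base x == base y)] =
  punct_line (base y) (dir y) ord_max.
Proof.
apply/setP => x; rewrite !inE cube1E.
apply/andP/andP => [[_ /andP[/andP[ax xd] /eqP bxy]]|[/eqP xE xd]].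
  have dxy : dir x = dir y by rewrite /dir bxy.
  split; last by rewrite -dxy.
  apply/eqP/ffunP => t; rewrite updE; case: eqP => [->|/eqP td]; first by rewrite -dxy.
  rewrite -bxy mixE; case: ifP => // tJ; apply/eqP; apply: contraTT ax => xt.
  rewrite ffunE in xt.
  by apply/subsetPn; exists t; rewrite !inE ?tJ ?xt ?dxy.
have bxy : base x = base y.
  apply/ffunP => t; rewrite !mixE; case: ifP => // /negbT tJ.
  rewrite xE updE; case: eqP => [tdy|_]; last by rewrite mixE (negbTE tJ).
  by move: tJ; rewrite tdy dirJ.
have dxy : dir x = dir y by rewrite /dir bxy.
have ax : axial x.
  rewrite /axial dxy xd andbT; apply/subsetP => t; rewrite !inE => /andP[tJ].
  by rewrite xE updE; case: (t =P dir y) => // _; rewrite /base /= mixE tJ ffunE eqxx.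
rewrite bxy eqxx ax; split=> //.
by apply: contraL ax => /imsetP[j jJ ->]; apply: corner_notin_axial.
Qed.

Definition leftover (z : pt) : {set pt} := [set x in cube z (~: J) |
  [&& ~~ axial x, x \notin offaxis J & x \notin corner @: J]].

Section Face.
Variable z : pt.
Hypothesis zJ : z \in cube origin J.

Let supp_face x : x \in cube z (~: J) -> J :&: supp x = supp z.
Proof.
move=> /cubeP xz; move/cubeP: zJ => zJ'; apply/setP => t; rewrite !inE.
case: (boolP (t \in J)) => tJ; first by rewrite xz ?inE ?tJ.
by rewrite zJ' // ffunE eqxx.
Qed.

Let suppJ : supp z \subset J.
Proof.
apply/subsetP => t; rewrite inE; apply: contraR => tJ.
by move/cubeP: zJ => ->; rewrite ?ffunE.
Qed.

Let face_center x : x \in cube z (~: J) ->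
  (x \in offaxis J) || (x \in corner @: J) -> x = z.
Proof.
move=> /cubeP xz /orP xJ; have {xJ} /cubeP xJ : x \in cube origin J.
  case: xJ => [|/imsetP[j jJ ->]]; first by rewrite in_offaxis => /andP[].
  by apply/cubeP => t tJ; rewrite !ffunE; case: eqP => // tj; move: tJ; rewrite tj jJ.
move/cubeP: zJ => zJ'; apply/ffunP => t; case: (boolP (t \in J)) => tJ.
  by rewrite xz // inE tJ.
by rewrite xJ ?zJ'.
Qed.

Lemma leftover_supp_gt1 : 1 < #|supp z| -> leftover z = cube z (~: J) :\ z.
Proof.
move=> sz; apply/setP => x; rewrite !inE andbC.
case: (boolP (x \in cube z (~: J))) => xz; rewrite ?andbF //=.
have -> : axial x = false.
  apply/negbTE/nandP; left; rewrite (supp_face xz); apply: contraTN sz => sub.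
  by rewrite -leqNgt -(cards1 (dir x)) subset_leq_card.
case: (x =P z) => [->|/eqP xnz]; first by rewrite in_offaxis zJ sz.
rewrite /= !andbT; apply/andP; split; apply/negP => oc; case/eqP: xnz.
  by apply: face_center xz _; rewrite oc.
by apply: face_center xz _; rewrite oc orbT.
Qed.

Lemma leftover_supp0 : supp z = set0 -> leftover z = set0.
Proof.
move=> z0; apply/setP => x; rewrite !inE; apply/negP => /andP[xz /and3P[/negP[]]].
rewrite /axial (supp_face xz) z0 sub0set /=.
move/cubeP: xz => ->; last by rewrite inE negbK dirJ.
have : dir x \notin supp z by rewrite z0 inE.
by rewrite inE negbK => /eqP->; rewrite eq_sym ord_max_neq0.
Qed.

Lemma leftover_supp1_max j : supp z = [set j] -> z j = ord_max ->
  leftover z = cube z (~: J) :\ z.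
Proof.
move=> zj zmax; have zc : z = corner j.
  apply/ffunP => t; rewrite ffunE; case: eqP => [->//|/eqP tj].
  have : t \notin supp z by rewrite zj inE.
  by rewrite inE negbK => /eqP.
apply/setP => x; rewrite !inE andbC.
case: (boolP (x \in cube z (~: J))) => xz; rewrite ?andbF //=.
have zC : z \in corner @: J by rewrite {1}zc imset_f // -sub1set -zj suppJ.
case: (x =P z) => [->|/eqP xnz]; first by rewrite zC !andbF.
rewrite andbT; apply/and3P; split; first last.
- by apply/negP => xc; case/eqP: xnz; apply: face_center; rewrite ?xc ?orbT.
- by apply/negP => xo; case/eqP: xnz; apply: face_center xz _; rewrite xo.
rewrite /axial (supp_face xz) zj sub1set inE negb_and negbK.
by case: eqP => //= <-; move/cubeP: xz => ->; rewrite ?zmax ?eqxx // inE negbK -sub1set -zj.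
Qed.

Lemma dir_fiber j (w : pt) (K : {set 'I_d}) : K \subset ~: J ->
  [set y in cube origin (~: J) | lab y == j] = cube w K ->
  [set x in cube z (~: J) | dir x == j] = cube (mix J z w) K.
Proof.
move=> /subsetP KJ fib.
have /cubeP w0 : w \in cube origin (~: J).
  by have := cube_center w K; rewrite -fib inE => /andP[].
apply/setP => x; rewrite inE.
have -> : (dir x == j) = (base x \in cube w K) by rewrite -fib inE base_cube.
apply/andP/cubeP => [[/cubeP xz /cubeP bw] t tK|xw].
  rewrite mixE; case: ifP => tJ; first by apply: xz; rewrite inE tJ.
  by have := bw t tK; rewrite /base /= mixE tJ.
split.
  apply/cubeP => t; rewrite inE negbK => tJ; rewrite xw ?mixE ?tJ //.
  by apply: contraL tJ => /KJ; rewrite inE.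
apply/cubeP => t tK; rewrite /base /= mixE; case: ifP => tJ; last by rewrite xw // mixE tJ.
by rewrite w0 ?inE ?tJ // ffunE.
Qed.

Lemma leftover_supp1 j : supp z = [set j] -> z j != ord_max ->
  leftover z = cube z (~: J) :\: [set x in cube z (~: J) | dir x == j].
Proof.
move=> zj zmax; apply/setP => x; rewrite !inE andbC.
case: (boolP (x \in cube z (~: J))) => xz; rewrite ?andbF //= andbT.
have /norP[-> ->] : ~~ ((x \in offaxis J) || (x \in corner @: J)).
  apply/negP => oc; have xE := face_center xz oc.
  move: oc; rewrite xE => /orP[|/imsetP[j' _ zc]].
    by rewrite in_offaxis zj cards1 andbF.
  by move: zmax zj; rewrite zc supp_corner => + /set1_inj jj; rewrite jj ffunE !eqxx.
rewrite !andbT /axial (supp_face xz) zj sub1set inE eq_sym.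
by case: eqP => //= ->; move/cubeP: xz => ->; rewrite ?zmax // inE negbK -sub1set -zj suppJ.
Qed.

Lemma tiles_leftover : tiles i (leftover z).
Proof.
have [sz|] := ltnP 1 #|supp z|; first by rewrite leftover_supp_gt1 //; apply: tiles_cubeD1.
rewrite leq_eqVlt ltnS leqn0 cards_eq0 => /orP[/cards1P[j zj]|/eqP z0]; last first.
  by rewrite leftover_supp0 //; apply: tiles0.
case: (z j =P ord_max) => [zmax|/eqP zmax].
  by rewrite (leftover_supp1_max zj zmax); apply: tiles_cubeD1.
have jJ : j \in J by rewrite -sub1set -zj suppJ.
have [w [K [KJ fib]]] := lab_fiber jJ.
rewrite (leftover_supp1 zj zmax) (dir_fiber KJ fib); apply: tiles_cubeD => //.
by apply/cubeP => t; rewrite inE negbK mixE => ->.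
Qed.

End Face.

Lemma tiles_compl_corners : tiles i (~: (corner @: J)).
Proof.
pose g x := if axial x then inl (base x)
            else if x \in offaxis J then inr None else inr (Some (mix J x origin)).
apply: (tiles_fibers (g := g)) => y _; rewrite /g.
case: (boolP (axial y)) => ay.
  congr tiles: (tiles_punct_line (base y) (dir y) ord_max); rewrite -axial_fiber.
  by apply/setP => x; rewrite !inE; case: (axial x) => //=; case: ifP.
case: (boolP (y \in offaxis J)) => oy.
  congr tiles: (tiles_offaxis J); apply/setP => x; rewrite !inE.
  case: (boolP (x \in offaxis J)) => ox; last by case: (axial x); rewrite ?andbF.
  rewrite (negbTE (offaxis_notin_axial ox)) eqxx andbT; apply/esym/negP => /imsetP[j _ xc].
  by move: ox; rewrite xc (negbTE (corner_notin_offaxis j)).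
have zJ : mix J y origin \in cube origin J by apply/cubeP => t tJ; rewrite mixE (negbTE tJ).
congr tiles: (tiles_leftover zJ); apply/setP => x; rewrite !inE cube_mixE.
by case: (axial x); case: (x \in offaxis J); rewrite ?andbF //= andbC.
Qed.

End Complement.

Lemma tiles_compl_corners_card (J : {set 'I_d}) q :
  #|J| = q * n + 1 -> #|J| <= k ^ #|~: J| -> tiles i (~: (corner @: J)).
Proof.
move=> cJ JR; have [lab [lab_in lab_fiber]] := cube_partition_in origin n_gt0 cJ JR.
exact: tiles_compl_corners lab_in lab_fiber.
Qed.
End Tiling.

End Cubes.

Arguments corner {n d} j.

(** * The logarithmic bound *)

Section LogBound.
Local Open Scope R_scope.

Lemma INR_expn k e : INR (k ^ e) = INR k ^ e.
Proof. by elim: e => [|e IH] //=; rewrite expnS mult_INR IH. Qed.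

Lemma le_sub_logk (k d m : nat) : (2 <= k)%N -> (1 <= d)%N ->
  INR m <= INR d - logk k d -> (m <= d)%N /\ (d <= k ^ (d - m))%N.
Proof.
move=> /leP k2 /leP d1; rewrite /logk => md.
have kR : 2 <= INR k by apply: (le_INR 2).
have dR : 1 <= INR d by apply: (le_INR 1).
have lnk : 0 < ln (INR k) by rewrite -ln_1; apply: ln_increasing; lra.
have lnd : 0 <= ln (INR d).
  case: (Rle_lt_or_eq_dec _ _ dR) => [d_gt1|<-]; last by rewrite ln_1; lra.
  by rewrite -ln_1; apply/Rlt_le/ln_increasing; lra.
have lnd_le : ln (INR d) <= (INR d - INR m) * ln (INR k).
  have -> : ln (INR d) = ln (INR d) / ln (INR k) * ln (INR k) by field; lra.
  by apply: Rmult_le_compat_r; lra.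
have md_nat : (m <= d)%N by apply/leP/INR_le; nra.
split=> //; apply/leP/INR_le; rewrite INR_expn.
have kpos : 0 < INR k ^ (d - m) by apply: pow_lt; lra.
apply: Rnot_lt_le => lt_pow; have := ln_increasing _ _ kpos lt_pow.
by rewrite ln_pow -?minusE ?minus_INR; [lra | apply/leP | lra].
Qed.

End LogBound.

Theorem lemma3 (k i d : nat) (S : {set point k d}) :
  3 <= k -> 2 <= i <= k.-1 -> 1 <= d ->
  S \subset corners k d ->
  #|S| = 1 %[mod k.-1] ->
  Reals.Rdefinitions.Rle (Reals.Raxioms.INR #|S|)
    (Reals.Rdefinitions.Rminus (Reals.Raxioms.INR d) (logk k d)) ->
  tiles i (~: S).
Proof.
move=> k3 ik d1; case: k k3 ik S => [//|n] n2 /andP[i2 iN] S SC Smod Slog.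
have n_gt0 : 0 < n by lia.
have i_range : 0 < i <= n.+1 by lia.
set J := [set j : 'I_d | corner j \in S].
have SJ : S = corner @: J := sub_corners SC.
have cardJ : #|S| = #|J| by rewrite SJ card_imset //; apply: corner_inj n_gt0.
have [Jd dpow] := le_sub_logk (ltnW n2) d1 Slog.
rewrite SJ; apply: (tiles_compl_corners_card n_gt0 i_range (q := #|J| %/ n)).
  by rewrite {1}(divn_eq #|J| n) -cardJ Smod modn_small.
have cJ : #|~: J| = d - #|J| by have := cardsC J; rewrite card_ord; lia.
by rewrite cJ -cardJ (leq_trans Jd).
Qed.
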